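(* Let $\mathbf{X}$ and $\mathbf{Y}$ be $d$-dimensional random vectors whose components are mutually independent, i.e. $P(X_1=x_1,\dots,X_d=x_d)=\prod_{i=1}^dP(X_i=x_i)$ and $P(Y_1=y_1,\dots,Y_d=y_d)=\prod_{i=1}^dP(Y_i=y_i)$. Then $\mathbf{X}\succ_d\mathbf{Y}$ if and only if $\mathbf{X}\succ_{\mathrm{FSD}}\mathbf{Y}$.
   Context: For $\mathbf{x},\mathbf{y}\in\mathbb{R}^d$: $\mathbf{y}\preceq_p\mathbf{x}$ iff $y_i\le x_i$ for all $i$. CDF: $F_{\mathbf{X}}(\mathbf{x})=P(\mathbf{X}\preceq_p\mathbf{x})$. $\mathbf{X}\succeq_{\mathrm{FSD}}\mathbf{Y}$ iff $F_{\mathbf{X}}(\mathbf{v})\le F_{\mathbf{Y}}(\mathbf{v})$ for all $\mathbf{v}$; $\mathbf{X}\succ_{\mathrm{FSD}}\mathbf{Y}$ iff additionally strict inequality for some $\mathbf{v}$ (same for real random variables). Distributional dominance $\mathbf{X}\succ_d\mathbf{Y}$ iff $\mathbf{X}\succeq_{\mathrm{FSD}}\mathbf{Y}$ and $X_i\succ_{\mathrm{FSD}}Y_i$ for some $i\in\{1,\dots,d\}$. *)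

From HB Require Import structures.
From mathcomp Require Import all_boot all_order all_algebra.
From mathcomp Require Import all_classical all_reals all_analysis.
Set Implicit Arguments. Unset Strict Implicit. Unset Printing Implicit Defensive.
Import Order.TTheory GRing.Theory Num.Theory.
Local Open Scope classical_set_scope.
Local Open Scope ring_scope.

Section Defs.
Context {R : realType}.

Definition rvec {dT} {T : measurableType dT} (P : probability T R) (d : nat) :=
  'I_d -> {RV P >-> R}.

Definition lep {d : nat} (y x : 'I_d -> R) : Prop := forall i, y i <= x i.

Definition cdfv {dT} {T : measurableType dT} (P : probability T R) {d : nat}
  (X : rvec P d) (v : 'I_d -> R) : R :=
  fine (P [set w | lep (fun i => X i w) v]).

Definition cdf1 {dT} {T : measurableType dT} (P : probability T R)
  (X : {RV P >-> R}) (t : R) : R :=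
  fine (P [set w | X w <= t]).

Definition fsd_ge {d1 d2} {T1 : measurableType d1} {T2 : measurableType d2}
  (P1 : probability T1 R) (P2 : probability T2 R) {d : nat}
  (X : rvec P1 d) (Y : rvec P2 d) : Prop :=
  forall v, cdfv X v <= cdfv Y v.

Definition fsd_gt {d1 d2} {T1 : measurableType d1} {T2 : measurableType d2}
  (P1 : probability T1 R) (P2 : probability T2 R) {d : nat}
  (X : rvec P1 d) (Y : rvec P2 d) : Prop :=
  fsd_ge X Y /\ exists v, cdfv X v < cdfv Y v.

Definition fsd_gt1 {d1 d2} {T1 : measurableType d1} {T2 : measurableType d2}
  (P1 : probability T1 R) (P2 : probability T2 R)
  (X : {RV P1 >-> R}) (Y : {RV P2 >-> R}) : Prop :=
  (forall t, cdf1 X t <= cdf1 Y t) /\ exists t, cdf1 X t < cdf1 Y t.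

Definition dist_dom {d1 d2} {T1 : measurableType d1} {T2 : measurableType d2}
  (P1 : probability T1 R) (P2 : probability T2 R) {d : nat}
  (X : rvec P1 d) (Y : rvec P2 d) : Prop :=
  fsd_ge X Y /\ exists i, fsd_gt1 (X i) (Y i).

Definition discrete_rvec {dT} {T : measurableType dT} (P : probability T R)
  {d : nat} (X : rvec P d) : Prop :=
  exists S : set ('I_d -> R), countable S /\
    P [set w | S (fun i => X i w)] = 1%E.

Definition indep_components {dT} {T : measurableType dT} (P : probability T R)
  {d : nat} (X : rvec P d) : Prop :=
  forall x : 'I_d -> R,
    fine (P [set w | forall i, X i w = x i]) =
    \prod_(i < d) fine (P [set w | X i w = x i]).

End Defs.

(** With independent components, the joint CDF of a discrete vector
    factorises, [F_X(v) = prod_i F_{X_i}(v_i)]: on the finite grid spanned by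
    the first [n] support points this is the pmf product formula, and both
    sides are limits of the grid probabilities as [n -> oo].  Separately,
    [F_{X_i}(t)] is the limit of [F_X] at the point with [i]-th coordinate [t]
    and all other coordinates [n -> oo], so pointwise inequalities between
    joint CDFs pass to the marginals.  Hence a strict marginal inequality rules
    out [F_Y <= F_X] everywhere, while a strict inequality [F_X(v) < F_Y(v)]
    between the two products forces one between some pair of factors. *)
From HB Require Import structures.
From mathcomp Require Import all_boot all_order all_algebra.
From mathcomp Require Import all_classical all_reals all_analysis.
Import Order.TTheory GRing.Theory Num.Theory numFieldNormedType.Exports.
Local Open Scope classical_set_scope.
Local Open Scope ring_scope.

Lemma exists_nat_ge {R : realType} {I : finType} (f : I -> R) :
  exists n : nat, forall i, f i <= n%:R.
Proof.
exists (\max_i (Num.truncn `|f i|).+1)%N => i.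
apply: (le_trans (ler_norm _)); apply/ltW/(lt_le_trans (truncnS_gt _)).
by rewrite ler_nat; exact: leq_bigmax.
Qed.

Definition marginal_point {R : realType} {d} (i : 'I_d) (t : R) (n : nat) :
  'I_d -> R := fun j => if j == i then t else n%:R.

Section probability_events.
Context {R : realType} {dT : measure_display} {T : measurableType dT}.
Context {P : probability T R}.
Local Notation pr A := (fine (P A)).

Lemma probability_fineK A : measurable A -> (pr A)%:E = P A.
Proof. by move=> mA; rewrite fineK // fin_num_measure. Qed.

Lemma pr_ge0 A : 0 <= pr A.
Proof. exact/fine_ge0/measure_ge0. Qed.

Lemma le_pr A B : measurable A -> measurable B -> A `<=` B -> pr A <= pr B.
Proof.
move=> mA mB AB; rewrite -lee_fin !probability_fineK //.
by apply: le_measure; rewrite ?inE.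
Qed.

Lemma probability_setI_full B N : measurable B -> measurable N -> P N = 1%E ->
  P (B `&` N) = P B.
Proof.
move=> mB mN PN; rewrite [RHS](measureDI P mB mN).
have PNC : P (~` N) = 0%E by rewrite probability_setC // PN subee.
by rewrite (@subset_measure0 _ _ _ P (B `\` N) (~` N)) ?add0e //;
  [exact: measurableD | exact: measurableC].
Qed.

Lemma pr_bigcup_fin (J : finType) (G : J -> set T) :
  (forall j, measurable (G j)) -> trivIset setT G ->
  pr (\bigcup_j G j) = \sum_j pr (G j).
Proof.
move=> mG tG.
have mU : measurable (\bigcup_j G j).
  by apply: fin_bigcup_measurable => //; exact: finite_finset.
apply: EFin_inj; rewrite probability_fineK // -sumEFin.
under eq_bigr do rewrite probability_fineK //.
rewrite measure_fin_bigcup //; last exact: finite_finset.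
rewrite -[RHS]big_enum /= [RHS]fsbig_seq ?enum_uniq //.
by apply: eq_fsbigl; apply/seteqP; split => j //= _; rewrite mem_enum.
Qed.

Lemma cvg_pr_nondecreasing N (F : nat -> set T) B :
  measurable N -> P N = 1%E -> measurable B ->
  (forall n, measurable (F n)) -> (forall n m, (n <= m)%N -> F n `<=` F m) ->
  (forall n, F n `<=` B) -> B `&` N `<=` \bigcup_n F n ->
  pr (F n) @[n --> \oo] --> pr B.
Proof.
move=> mN PN mB mF ndF FB BNF.
have mU : measurable (\bigcup_n F n) by exact: bigcupT_measurable.
have -> : pr B = pr (\bigcup_n F n).
  apply/eqP; rewrite eq_le; apply/andP; split.
    rewrite -(probability_setI_full _ _ mB mN PN).
    by apply: le_pr => //; exact: measurableI.
  by apply: le_pr => // w [n _]; exact: FB.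
have ndF_seq : nondecreasing_seq F by move=> n m nm; apply/subsetPset; exact: ndF.
apply: fine_cvg; rewrite probability_fineK //.
exact: (nondecreasing_cvg_mu (mu := P) mF mU ndF_seq).
Qed.

Lemma measurable_forall (I : finType) (Q : I -> set T) :
  (forall i, measurable (Q i)) -> measurable [set w | forall i, Q i w].
Proof.
move=> mQ; rewrite (_ : [set w | forall i, Q i w] = \bigcap_(i in setT) Q i).
  by apply: fin_bigcap_measurable => //; exact: finite_finset.
by apply/seteqP; split => w /= h i //; apply: h.
Qed.

Lemma measurable_rv_le (Z : {RV P >-> R}) t : measurable [set w | Z w <= t].
Proof.
rewrite (_ : [set w | Z w <= t] = Z @^-1` [set` `]-oo, t]]).
  exact: measurable_funPTI (measurable_itv _).
by apply/seteqP; split => w /=; rewrite in_itv.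
Qed.

Lemma measurable_rv_countable (Z : {RV P >-> R}) (B : set R) :
  countable B -> measurable (Z @^-1` B).
Proof. by move=> cB; apply: measurable_funPTI; exact: countable_measurable. Qed.

Lemma measurable_cdfv_event {d} (X : rvec P d) v :
  measurable [set w | lep (fun i => X i w) v].
Proof. by apply: measurable_forall => i; exact: measurable_rv_le. Qed.

Lemma pr_rv_in_seq (Z : {RV P >-> R}) (L : seq R) (A : pred R) :
  pr [set w | Z w \in L /\ A (Z w)] =
  \sum_(x : seq_sub L) (A (val x))%:R * pr [set w | Z w = val x].
Proof.
pose G (x : seq_sub L) := Z @^-1` [set y | y = val x /\ A y].
have -> : [set w | Z w \in L /\ A (Z w)] = \bigcup_x G x.
  apply/seteqP; split => [w [wL Aw] | w [x _ [/= Zw Ax]]].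
    by exists (SeqSub wL).
  by rewrite /= Zw; split; [exact: (ssvalP x) | rewrite -Zw].
rewrite (@pr_bigcup_fin _ G) => [|x|]; first last.
- by move=> x y _ _ [w [[Zx _] [Zy _]]]; apply: val_inj; rewrite -Zx -Zy.
- rewrite /G; apply: measurable_rv_countable.
  apply: sub_countable (countable1 (val x)).
  by apply: subset_card_le => y [->].
apply: eq_bigr => x _; rewrite /G; case: (boolP (A (val x))) => Ax.
  rewrite mul1r; congr (fine (P _)).
  by apply/seteqP; split => w /= => [[]|->].
rewrite mul0r (_ : _ @^-1` _ = set0) ?measure0 //.
by apply/seteqP; split => w //= [->]; rewrite (negbTE Ax).
Qed.

Lemma pr_indep_finite_rect {d} (X : rvec P d) (L : seq R) (A : 'I_d -> pred R) :
  indep_components X ->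
  pr [set w | forall i, X i w \in L /\ A i (X i w)] =
  \prod_i pr [set w | X i w \in L /\ A i (X i w)].
Proof.
move=> iX; under [RHS]eq_bigr do rewrite pr_rv_in_seq.
rewrite bigA_distr_bigA.
pose G (g : {ffun 'I_d -> seq_sub L}) :=
  [set w | forall i, X i w = val (g i) /\ A i (X i w)].
have -> : [set w | forall i, X i w \in L /\ A i (X i w)] = \bigcup_g G g.
  apply/seteqP; split => [w /= XLA | w [g _ Gw] i].
    exists [ffun i => SeqSub (proj1 (XLA i))] => // i.
    by rewrite ffunE; split; last exact: (proj2 (XLA i)).
  by have [-> Ai] := Gw i; split => //; exact: (ssvalP (g i)).
rewrite (@pr_bigcup_fin _ G) => [|g|]; first last.
- move=> g h _ _ [w [Gw Hw]]; apply/ffunP => i; apply: val_inj.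
  by rewrite -(proj1 (Gw i)) -(proj1 (Hw i)).
- rewrite /G; apply: measurable_forall => i.
  apply: (measurable_rv_countable (X i) [set y | y = val (g i) /\ A i y]).
  apply: sub_countable (countable1 (val (g i))).
  by apply: subset_card_le => y [->].
apply: eq_bigr => g _.
case: (boolP [forall i, A i (val (g i))]) => [/forallP Ag|].
  rewrite (_ : G g = [set w | forall i, X i w = val (g i)]); last first.
    by apply/seteqP; split => w Xw i; [exact: (proj1 (Xw i)) | rewrite Xw].
  by rewrite iX; apply: eq_bigr => i _; rewrite Ag mul1r.
rewrite negb_forall => /existsP [i Ai].
rewrite (_ : G g = set0) ?measure0; last first.
  by apply/seteqP; split => w // /(_ i) [->]; rewrite (negbTE Ai).
by rewrite (bigD1 i) // (negbTE Ai) /= !mul0r.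
Qed.

Lemma cvg_cdfv_marginal {d} (X : rvec P d) i t :
  cdfv X (marginal_point i t n) @[n --> \oo] --> cdf1 (X i) t.
Proof.
apply: (cvg_pr_nondecreasing setT) => //.
- exact: probability_setT.
- exact: measurable_rv_le.
- by move=> n; exact: measurable_cdfv_event.
- move=> n m nm w Xw j; apply: (le_trans (Xw j)); rewrite /marginal_point.
  by case: eqP => // _; rewrite ler_nat.
- by move=> n w /(_ i); rewrite /marginal_point eqxx.
- move=> w [Xwt _]; have [n Xn] := exists_nat_ge (fun j => X j w).
  by exists n => // j; rewrite /marginal_point; case: eqP => [->|].
Qed.

Lemma discrete_rvec_finite_grids {d} (X : rvec P d) : discrete_rvec X ->
  exists (L : nat -> seq R) (N : set T),
  [/\ measurable N, P N = 1%E,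
      forall n m, (n <= m)%N -> {subset L n <= L m} &
      forall w, N w -> exists n, forall i, X i w \in L n].
Proof.
move=> [S [cS PS]]; have /pcard_surjP [e Se] := cS.
(* [e] enumerates the support; grid [n] holds the coordinates of its first [n] points. *)
exists (fun n => [seq e k i | k <- iota 0 n, i <- enum 'I_d]).
exists [set w | S (fun i => X i w)]; split => //.
- have -> : [set w | S (fun i => X i w)] =
      \bigcup_(k in [set k | S (e k)]) [set w | forall i, X i w = e k i].
    apply/seteqP; split => [x Sx | x [k Sk Xx]].
      by have [k _ ek] := Se _ Sx; exists k; rewrite /= ek.
    rewrite /= (_ : (fun i => X i x) = e k) //.
    by apply/funext => i; exact: Xx.
  apply: bigcup_measurable => k _; apply: measurable_forall => i.
  exact: (measurable_rv_countable (X i) [set e k i] (countable1 (e k i))).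
- move=> n m nm x /allpairsP [[k i] /= [kn _ ->]].
  apply: allpairs_f; last exact: mem_enum.
  by rewrite !mem_iota /= !add0n in kn *; exact: leq_trans kn nm.
- move=> w /Se [k _ ek]; exists k.+1 => i.
  rewrite (_ : X i w = e k i); last by rewrite ek.
  by apply: allpairs_f; rewrite ?mem_iota ?mem_enum /= ?add0n ?ltnSn.
Qed.

Lemma cdfv_indep {d} {X : rvec P d} : discrete_rvec X -> indep_components X ->
  forall v, cdfv X v = \prod_i cdf1 (X i) (v i).
Proof.
move=> /discrete_rvec_finite_grids [L [N [mN PN L_mono N_L]]] iX v.
pose C i n := [set w | X i w \in L n /\ X i w <= v i].
have mC i n : measurable (C i n).
  apply: (measurable_rv_countable (X i) [set y | y \in L n /\ y <= v i]).
  apply: sub_countable (finite_set_countable (finite_seq (L n))).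
  by apply: subset_card_le => y [].
have C_cvg i : pr (C i n) @[n --> \oo] --> cdf1 (X i) (v i).
  apply: (cvg_pr_nondecreasing N) => //.
  - exact: measurable_rv_le.
  - by move=> n m nm w [XL Xv]; split => //; exact: L_mono XL.
  - by move=> n w [].
  - by move=> w [Xv /N_L [n Xn]]; exists n.
have rect_cvg : pr [set w | forall i, C i n w] @[n --> \oo] --> cdfv X v.
  apply: (cvg_pr_nondecreasing N) => //.
  - exact: measurable_cdfv_event.
  - by move=> n; exact: measurable_forall.
  - move=> n m nm w Cw i; have [XL Xv] := Cw i.
    by split => //; exact: L_mono XL.
  - by move=> n w Cw i; have [] := Cw i.
  - by move=> w [Xv /N_L [n Xn]]; exists n.
have rectE n : pr [set w | forall i, C i n w] = \prod_i pr (C i n).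
  exact: (pr_indep_finite_rect X (L n) (fun i x => x <= v i) iX).
rewrite (funext rectE) in rect_cvg.
apply: (cvg_unique _ rect_cvg) => //.
by apply: cvg_big => //; exact: mul_continuous.
Qed.

End probability_events.

Lemma fsd_ge_marginal {R : realType} {d1 d2}
    {T1 : measurableType d1} {T2 : measurableType d2}
    {P1 : probability T1 R} {P2 : probability T2 R} {d}
    {X : rvec P1 d} {Y : rvec P2 d} :
  fsd_ge X Y -> forall i t, cdf1 (X i) t <= cdf1 (Y i) t.
Proof.
move=> XY i t; rewrite -subr_ge0.
apply: (cvgr_to_ge (cvgB (cvg_cdfv_marginal Y i t) (cvg_cdfv_marginal X i t))).
by apply: nearW => n; rewrite subr_ge0; exact: XY.
Qed.

Theorem mainTheorem12 (R : realType) (d1 d2 : measure_display)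
  (T1 : measurableType d1) (T2 : measurableType d2)
  (P1 : probability T1 R) (P2 : probability T2 R) (d : nat)
  (X : rvec P1 d) (Y : rvec P2 d) :
  discrete_rvec X -> discrete_rvec Y ->
  indep_components X -> indep_components Y ->
  (dist_dom X Y <-> fsd_gt X Y).
Proof.
move=> dX dY iX iY; split.
- move=> [XY [i [_ [t XYt]]]]; split => //.
  apply: contrapT => /forallNP noV.
  have YX : fsd_ge Y X by move=> v; rewrite leNgt; apply/negP/noV.
  by have := fsd_ge_marginal YX i t; rewrite leNgt XYt.
- move=> [XY [v XYv]]; split => //.
  have [i XYi] : exists i, cdf1 (X i) (v i) < cdf1 (Y i) (v i).
    apply: contrapT => /forallNP noI.
    move: XYv; rewrite (cdfv_indep dX iX) (cdfv_indep dY iY) ltNge => /negP.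
    by apply; apply: ler_prod => i _; rewrite pr_ge0 leNgt; apply/negP/noI.
  by exists i; split; [exact: fsd_ge_marginal XY i | exists (v i)].
Qed.
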